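(* Let $\ell^\infty\neq0$ be real. For $k\in\{1,2\}$ let $\Sigma^{(k)}$ be disjoint finite site sets, each consisting of real sites, complex sites and their conjugates, with multiplicities $m_\alpha\ge1$, levels $\ell^\alpha_{[p]}$ ($0\le p\le m_\alpha-1$, $\ell^\alpha_{[m_\alpha-1]}\ne0$) real for real sites and with $m_{\bar\alpha}=m_\alpha$, $\ell^{\bar\alpha}_{[p]}=\overline{\ell^\alpha_{[p]}}$ for conjugate sites, and pairwise distinct positions $z_\alpha$ real for real sites and $z_{\bar\alpha}=\overline{z_\alpha}$. Let $\chi_k(z)=\sum_{\alpha\in\Sigma^{(k)}}\sum_p\frac{\ell^\alpha_{[p]}}{(z-z_\alpha)^{p+1}}$, $\varphi_k=\chi_k-\ell^\infty$, $M_k=\sum_{\alpha\in\Sigma^{(k)}}m_\alpha$, $M=M_1+M_2$, with simple zeros $\zeta^{(1)}_i$ ($i\le M_1$) of $\varphi_1$ and $\zeta^{(2)}_i$ ($M_1<i\le M$) of $\varphi_2$. For real $\gamma\neq0$ let $\varphi_{1\otimes2,\gamma}(z)=\chi_1(z)+\chi_2(z-\gamma^{-1})-\ell^\infty$, with zeros $\zeta_i(\gamma)$ labelled for small $\gamma$ so that $\zeta_i(\gamma)=\zeta^{(1)}_i+O(\gamma)$ ($i\le M_1$) and $\zeta_i(\gamma)=\gamma^{-1}+\zeta^{(2)}_i+O(\gamma)$ ($i>M_1$). Fix $i\in\{1,\dots,M\}$, let $k=1$ if $i\le M_1$ and $k=2$ otherwise, and suppose $\zeta^{(k)}_i$ is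 real. Then for $\gamma$ small enough, $\zeta_i(\gamma)$ is real, and $\varphi_{1\otimes2,\gamma}'(\zeta_i(\gamma))$ and $\varphi_k'(\zeta^{(k)}_i)$ have the same sign. *)

From HB Require Import structures.
From mathcomp Require Import all_boot all_order all_algebra.
From mathcomp Require Import complex.
From mathcomp Require Import reals.
Set Implicit Arguments. Unset Strict Implicit. Unset Printing Implicit Defensive.
Import Order.TTheory GRing.Theory Num.Theory.
Local Open Scope ring_scope.
Local Open Scope complex_scope.

(* A finite site set: sites indexed by 'I_(nsites S); site a has position
   pos S a and the list of levels lev S a = [:: l_[0]; ...; l_[m_a - 1]]
   (so the multiplicity is m_a = size (lev S a)). *)
Record siteset (R : rcfType) := SiteSet {
  nsites : nat;
  pos : 'I_nsites -> R[i];
  lev : 'I_nsites -> seq R[i] }.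
Arguments nsites {R} s : rename.
Arguments pos {R} s _ : rename.
Arguments lev {R} s _ : rename.

(* For a real site (z_a real) distinctness forces b = a, hence real
     levels; non-real sites come in conjugate pairs. *)
Definition valid_siteset (R : rcfType) (S : siteset R) : Prop :=
  [/\ injective (pos S),
      (forall a, 0 < size (lev S a))%N,
      (forall a, last 0 (lev S a) != 0) &
      (forall a, exists b, pos S b = (pos S a)^* /\
                           lev S b = map (@conjc R) (lev S a))].

Definition mult (R : rcfType) (S : siteset R) : nat :=
  (\sum_(a < nsites S) size (lev S a))%N.

Definition chi (R : rcfType) (S : siteset R) (z : R[i]) : R[i] :=
  \sum_(a < nsites S) \sum_(p < size (lev S a))
     (lev S a)`_p / (z - pos S a) ^+ p.+1.

Definition dchi (R : rcfType) (S : siteset R) (z : R[i]) : R[i] :=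
  \sum_(a < nsites S) \sum_(p < size (lev S a))
     - ((p.+1)%:R * (lev S a)`_p) / (z - pos S a) ^+ p.+2.

Definition nonpole (R : rcfType) (S : siteset R) (z : R[i]) : Prop :=
  forall a, z != pos S a.

Definition phi (R : rcfType) (S : siteset R) (linf : R) (z : R[i]) : R[i] :=
  chi S z - linf%:C.

Definition is_zero (R : rcfType) (S : siteset R) (linf : R) (z : R[i]) : Prop :=
  nonpole S z /\ phi S linf z = 0.

Definition phi12 (R : rcfType) (S1 S2 : siteset R) (linf gam : R) (z : R[i]) : R[i] :=
  chi S1 z + chi S2 (z - (gam^-1)%:C) - linf%:C.

Definition dphi12 (R : rcfType) (S1 S2 : siteset R) (gam : R) (z : R[i]) : R[i] :=
  dchi S1 z + dchi S2 (z - (gam^-1)%:C).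

Definition is_zero12 (R : rcfType) (S1 S2 : siteset R) (linf gam : R) (z : R[i]) : Prop :=
  [/\ nonpole S1 z, nonpole S2 (z - (gam^-1)%:C) & phi12 S1 S2 linf gam z = 0].

From HB Require Import structures.
From mathcomp Require Import all_boot all_order all_algebra.
From mathcomp Require Import complex.
From mathcomp Require Import reals.
From mathcomp Require Import classical_sets topology normedtype.
From mathcomp Require Import ring lra zify.
Import Order.TTheory GRing.Theory Num.Theory.
Import numFieldNormedType.Exports.
Local Open Scope ring_scope.
Local Open Scope complex_scope.
Local Open Scope classical_set_scope.

Set Implicit Arguments. Unset Strict Implicit. Unset Printing Implicit Defensive.

(* Away from its poles, phi_k = chi_k - l_infty equals chi_num / chi_den, where
   chi_num is a polynomial of degree M_k; hence the M_k distinct zeros of phi_k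
   are simple, and phi_k' is real at a real zero by the conjugation symmetry of
   the site set.
   Since phi_{1(x)2,gamma} also commutes with conjugation, both zeta_i(gamma) and
   its conjugate are zeros, so (zeta_i(gamma) - conj zeta_i(gamma)) times the
   divided difference of phi_{1(x)2,gamma} between them vanishes.  As gamma -> 0
   the other cluster is pushed to infinity by the shift gamma^-1 and this divided
   difference tends to phi_k'(zeta_i) <> 0; thus zeta_i(gamma) is real, the
   divided difference is phi_{1(x)2,gamma}'(zeta_i(gamma)), and its sign is
   eventually that of phi_k'(zeta_i). *)

Section Conjugation.
Variables (R : rcfType) (S : siteset R).
Hypothesis validS : valid_siteset S.

Lemma siteset_conj_perm : exists2 s : 'I_(nsites S) -> 'I_(nsites S), injective s &
  forall a, pos S (s a) = (pos S a)^* /\ lev S (s a) = map (@conjc R) (lev S a).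
Proof.
case: validS => pos_inj _ _ /fin_all_exists[s sP]; exists s => // a b sab.
apply: pos_inj; rewrite -[pos S a]conjcK -[pos S b]conjcK.
by have [<- _] := sP a; have [<- _] := sP b; rewrite sab.
Qed.

Lemma nonpole_conj z : nonpole S z -> nonpole S z^*.
Proof.
case: validS => _ _ _ conjS nz a; apply/eqP => za.
have [b [posb _]] := conjS a; have /eqP := nz b.
by rewrite posb -za conjcK.
Qed.

Lemma chi_conj z : chi S z^* = (chi S z)^*.
Proof.
have [s s_inj sP] := siteset_conj_perm.
rewrite /chi (reindex_inj s_inj) rmorph_sum; apply: eq_bigr => a _.
have [-> ->] := sP a; rewrite size_map rmorph_sum; apply: eq_bigr => p _.
by rewrite (nth_map 0) // rmorphM fmorphV rmorphXn rmorphB.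
Qed.

Lemma dchi_conj z : dchi S z^* = (dchi S z)^*.
Proof.
have [s s_inj sP] := siteset_conj_perm.
rewrite /dchi (reindex_inj s_inj) rmorph_sum; apply: eq_bigr => a _.
have [-> ->] := sP a; rewrite size_map rmorph_sum; apply: eq_bigr => p _.
rewrite (nth_map 0) // rmorphM rmorphN rmorphM fmorphV.
by rewrite rmorphXn rmorphB rmorph_nat.
Qed.

End Conjugation.

Lemma normcR (R : rcfType) (x : R) : `|x%:C| = `|x|%:C.
Proof. by rewrite normc_def /= expr0n addr0 sqrtr_sqr. Qed.

Lemma conjc_subR (R : rcfType) (z : R[i]) (r : R) : (z - r%:C)^* = z^* - r%:C.
Proof. by rewrite rmorphB /= oppr0. Qed.

Lemma Im_eq0_conjc (R : rcfType) (x : R[i]) : complex.Im x = 0 <-> x^* = x.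
Proof. by case: x => a b /=; split=> [->|[]]; rewrite ?oppr0 //; lra. Qed.

Lemma dchi_real (R : rcfType) (S : siteset R) z : valid_siteset S ->
  complex.Im z = 0 -> complex.Im (dchi S z) = 0.
Proof.
by move=> validS /Im_eq0_conjc zJ; apply/Im_eq0_conjc; rewrite -dchi_conj // zJ.
Qed.

Lemma phi12_conj (R : rcfType) (S1 S2 : siteset R) (linf g : R) (z : R[i]) :
  valid_siteset S1 -> valid_siteset S2 ->
  phi12 S1 S2 linf g z^* = (phi12 S1 S2 linf g z)^*.
Proof.
move=> v1 v2; rewrite /phi12 !rmorphB rmorphD /= -(chi_conj v1) -(chi_conj v2).
by rewrite rmorphB /= oppr0.
Qed.

Lemma dphi12_conj (R : rcfType) (S1 S2 : siteset R) (g : R) (z : R[i]) :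
  valid_siteset S1 -> valid_siteset S2 ->
  dphi12 S1 S2 g z^* = (dphi12 S1 S2 g z)^*.
Proof.
move=> v1 v2; rewrite /dphi12 rmorphD /= -(dchi_conj v1) -(dchi_conj v2).
by rewrite rmorphB /= oppr0.
Qed.

Section Slope.
Variable R : rcfType.
Implicit Types (S : siteset R) (u v z w : R[i]).

Definition homog_sum u v p : R[i] := \sum_(j < p.+1) u ^+ (p - j).+1 * v ^+ j.+1.

Lemma subr_invX z w p : z != 0 -> w != 0 ->
  z^-1 ^+ p.+1 - w^-1 ^+ p.+1 = (w - z) * homog_sum z^-1 w^-1 p.
Proof.
move=> z0 w0; rewrite subrXX.
have -> : z^-1 - w^-1 = (w - z) * (z^-1 * w^-1) by field; rewrite z0 w0.
rewrite -mulrA /homog_sum big_distrr; congr (_ * _); apply: eq_bigr => j _ /=.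
by rewrite !exprS; ring.
Qed.

Lemma homog_sum_diag u p : homog_sum u u p = u ^+ p.+2 *+ p.+1.
Proof.
rewrite /homog_sum (eq_bigr (fun=> u ^+ p.+2)) ?sumr_const ?card_ord // => j _.
by rewrite -exprD addSn addnS subnK // -ltnS.
Qed.

Lemma homog_sum00 p : homog_sum 0 0 p = 0.
Proof. by rewrite /homog_sum big1 // => j _; rewrite expr0n mul0r. Qed.

Definition slope S z w : R[i] :=
  \sum_(a < nsites S) \sum_(p < size (lev S a))
    - (lev S a)`_p * homog_sum (z - pos S a)^-1 (w - pos S a)^-1 p.

Lemma chi_sub_slope S z w : nonpole S z -> nonpole S w ->
  chi S z - chi S w = (z - w) * slope S z w.
Proof.
move=> nz nw; rewrite /chi /slope -sumrB big_distrr; apply: eq_bigr => a _ /=.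
rewrite -sumrB big_distrr; apply: eq_bigr => p _ /=.
have za : z - pos S a != 0 by rewrite subr_eq0 nz.
have wa : w - pos S a != 0 by rewrite subr_eq0 nw.
rewrite -!exprVn -mulrBr subr_invX //; ring.
Qed.

Lemma slope_diag S z : slope S z z = dchi S z.
Proof.
rewrite /slope /dchi; apply: eq_bigr => a _; apply: eq_bigr => p _.
rewrite homog_sum_diag -exprVn -mulr_natl; ring.
Qed.

Definition slope12 (S1 S2 : siteset R) (g : R) z w : R[i] :=
  slope S1 z w + slope S2 (z - (g^-1)%:C) (w - (g^-1)%:C).

Lemma phi12_sub_slope S1 S2 linf g z w :
  nonpole S1 z -> nonpole S1 w ->
  nonpole S2 (z - (g^-1)%:C) -> nonpole S2 (w - (g^-1)%:C) ->
  phi12 S1 S2 linf g z - phi12 S1 S2 linf g w = (z - w) * slope12 S1 S2 g z w.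
Proof.
move=> n1z n1w n2z n2w.
have -> : phi12 S1 S2 linf g z - phi12 S1 S2 linf g w =
    (chi S1 z - chi S1 w) + (chi S2 (z - (g^-1)%:C) - chi S2 (w - (g^-1)%:C)).
  by rewrite /phi12; ring.
rewrite !chi_sub_slope // /slope12; ring.
Qed.

Lemma dphi12_slope12 S1 S2 g z : dphi12 S1 S2 g z = slope12 S1 S2 g z z.
Proof. by rewrite /dphi12 /slope12 !slope_diag. Qed.

End Slope.

Section Numerator.
Variables (R : rcfType) (S : siteset R) (linf : R).
Local Notation n := (nsites S).
Local Notation m a := (size (lev S a)).
Local Notation X_ a := ('X - (pos S a)%:P).

Definition chi_den : {poly R[i]} := \prod_(a < n) X_ a ^+ m a.

Definition chi_cofactor a p : {poly R[i]} := chi_den %/ X_ a ^+ p.+1.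

Definition chi_num : {poly R[i]} :=
  \sum_(a < n) \sum_(p < m a) (lev S a)`_p *: chi_cofactor a p - linf%:C *: chi_den.

Lemma chi_cofactorK a p : (p < m a)%N -> chi_cofactor a p * X_ a ^+ p.+1 = chi_den.
Proof.
move=> ltpm; apply: divpK; rewrite /chi_den (bigD1 a) //=.
by apply: dvdp_mulr; apply: dvdp_exp2l.
Qed.

Lemma chi_den_monic : chi_den \is monic.
Proof. by apply: monic_prod => a _; apply/monic_exp/monicXsubC. Qed.

Lemma size_chi_den : size chi_den = (mult S).+1.
Proof.
rewrite size_prod => [|a _]; last by rewrite expf_neq0 // polyXsubC_eq0.
under eq_bigr do rewrite size_exp_XsubC -addn1.
by rewrite big_split /= sum1_card card_ord -addSn addnK.
Qed.

Lemma size_chi_cofactor a p :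
  (p < m a)%N -> size (chi_cofactor a p) = (mult S - p)%N.
Proof.
move=> ltpm; have := chi_cofactorK ltpm.
have [->|nz] := eqVneq (chi_cofactor a p) 0.
  by rewrite mul0r => /esym/eqP; rewrite (negPf (monic_neq0 chi_den_monic)).
move=> E; have := size_Mmonic nz (monic_exp p.+1 (monicXsubC (pos S a))).
rewrite E size_exp_XsubC size_chi_den; lia.
Qed.

Lemma horner_chi_cofactor x a p : nonpole S x -> (p < m a)%N ->
  (chi_cofactor a p).[x] = chi_den.[x] / (x - pos S a) ^+ p.+1.
Proof.
move=> nx ltpm; have xa : x - pos S a != 0 by rewrite subr_eq0 nx.
by rewrite -(chi_cofactorK ltpm) hornerM horner_exp hornerXsubC mulfK ?expf_neq0.
Qed.

Lemma horner_deriv_chi_cofactor x a p : nonpole S x -> (p < m a)%N ->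
  (chi_cofactor a p)^`().[x] = chi_den^`().[x] / (x - pos S a) ^+ p.+1
     - p.+1%:R * chi_den.[x] / (x - pos S a) ^+ p.+2.
Proof.
move=> nx ltpm; have xa : x - pos S a != 0 by rewrite subr_eq0 nx.
rewrite -(chi_cofactorK ltpm) derivM deriv_exp derivXsubC mul1r hornerD !hornerM.
rewrite hornerMn !horner_exp hornerXsubC !exprS -mulr_natr.
by field; rewrite expf_neq0 ?xa.
Qed.

Lemma horner_chi_num x : nonpole S x -> chi_num.[x] = chi_den.[x] * phi S linf x.
Proof.
move=> nx; rewrite /chi_num /phi /chi hornerD hornerN hornerZ !horner_sum.
rewrite mulrBr mulrC.
congr (_ - _); rewrite big_distrr; apply: eq_bigr => a _ /=.
rewrite horner_sum big_distrr; apply: eq_bigr => p _ /=.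
by rewrite hornerZ horner_chi_cofactor // mulrCA mulrA.
Qed.

Lemma horner_deriv_chi_num x : nonpole S x ->
  chi_num^`().[x] = chi_den^`().[x] * phi S linf x + chi_den.[x] * dchi S x.
Proof.
move=> nx; rewrite /chi_num derivB derivZ !raddf_sum.
rewrite hornerD hornerN hornerZ !horner_sum.
rewrite /phi /chi /dchi mulrBr addrAC !big_distrr -big_split /=.
congr (_ - _); last exact: mulrC.
apply: eq_bigr => a _; rewrite raddf_sum horner_sum !big_distrr -big_split.
apply: eq_bigr => p _ /=; rewrite derivZ hornerZ horner_deriv_chi_cofactor //; ring.
Qed.

Lemma coef_chi_num k : (mult S <= k)%N ->
  chi_num`_k = if k == mult S then - linf%:C else 0.
Proof.
move=> leMk; rewrite /chi_num coefB coefZ coef_sum.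
rewrite big1 ?sub0r => [|a _]; last first.
  rewrite coef_sum big1 // => p _; rewrite coefZ [_`_k]nth_default ?mulr0 //.
  by rewrite size_chi_cofactor //; lia.
have [->|neMk] := eqVneq k (mult S).
  have /monicP := chi_den_monic; rewrite lead_coefE size_chi_den => ->.
  by rewrite mulr1.
by rewrite nth_default ?mulr0 ?oppr0 // size_chi_den; lia.
Qed.

Lemma size_chi_num : linf != 0 -> size chi_num = (mult S).+1.
Proof.
move=> linf0; apply/eqP; rewrite eqn_leq; apply/andP; split.
  apply/leq_sizeP => k ltMk.
  by rewrite coef_chi_num ?(ltnW ltMk) // gtn_eqF.
rewrite ltnNge; apply: contra linf0 => /leq_sizeP/(_ _ (leqnn _)).
by rewrite coef_chi_num // eqxx => /eqP; rewrite oppr_eq0 => /eqP[->].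
Qed.

End Numerator.

(* The quotient of chi_num by X - zeta j has size M; if zeta j were a double
   zero it would still vanish at all M distinct zeros. *)
Lemma dchi_zero_neq0 (R : rcfType) (S : siteset R) (linf : R)
    (zeta : 'I_(mult S) -> R[i]) :
  linf != 0 -> injective zeta -> (forall j, is_zero S linf (zeta j)) ->
  forall j, dchi S (zeta j) != 0.
Proof.
move=> linf0 zeta_inj zeta_zero j; apply/negP => /eqP dchi0.
have [nz phiz] := zeta_zero j.
have /factor_theorem[N numE] : root (chi_num S linf) (zeta j).
  by rewrite rootE horner_chi_num // phiz mulr0.
have N0 : N != 0.
  apply/eqP => N0; have := size_chi_num S linf0.
  by rewrite numE N0 mul0r size_poly0.
have sizeN : size N = mult S.
  have := size_chi_num S linf0.
  by rewrite numE size_Mmonic ?monicXsubC // size_XsubC addnC => -[].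
have rootN k : root N (zeta k).
  have [->|neqkj] := eqVneq k j.
    have := horner_deriv_chi_num linf nz; rewrite phiz dchi0 !mulr0 addr0.
    rewrite numE derivM derivXsubC mulr1 hornerD hornerM hornerXsubC subrr.
    by rewrite mulr0 add0r rootE => ->.
  have [nk phik] := zeta_zero k; have := horner_chi_num linf nk.
  rewrite phik mulr0 numE hornerM hornerXsubC => /eqP.
  by rewrite mulf_eq0 subr_eq0 (inj_eq zeta_inj) (negPf neqkj) orbF.
have rootsN : all (root N) (map zeta (enum 'I_(mult S))).
  by apply/allP => _ /mapP[k _ ->].
have := max_poly_roots N0 rootsN.
rewrite map_inj_uniq ?enum_uniq // size_map size_enum_ord sizeN ltnn.
by move/(_ isT).
Qed.

Lemma dchi_block_neq0 (R : rcfType) (linf : R) (S1 S2 : siteset R)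
    (zeta : 'I_(mult S1 + mult S2) -> R[i]) :
  linf != 0 ->
  (forall j : 'I_(mult S1 + mult S2),
     if (j < mult S1)%N then is_zero S1 linf (zeta j)
     else is_zero S2 linf (zeta j)) ->
  (forall j1 j2 : 'I_(mult S1 + mult S2),
     (j1 < mult S1)%N = (j2 < mult S1)%N -> zeta j1 = zeta j2 -> j1 = j2) ->
  forall i : 'I_(mult S1 + mult S2),
    dchi (if (i < mult S1)%N then S1 else S2) (zeta i) != 0.
Proof.
move=> linf0 zeta_zero zeta_inj i; case: splitP => [j|k] iE /=.
  have -> : i = lshift (mult S2) j by apply: val_inj.
  apply: (dchi_zero_neq0 (zeta := fun j => zeta (lshift (mult S2) j)) linf0).
    move=> j1 j2 /= eq12.
    by apply: lshift_inj; apply: (zeta_inj _ _ _ eq12); rewrite /= !ltn_ord.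
  by move=> j'; have := zeta_zero (lshift _ j'); rewrite /= ltn_ord.
have -> : i = rshift (mult S1) k by apply: val_inj.
apply: (dchi_zero_neq0 (zeta := fun k => zeta (rshift (mult S1) k)) linf0).
  move=> k1 k2 /= eq12.
  by apply: rshift_inj; apply: (zeta_inj _ _ _ eq12); rewrite /= !ltnNge !leq_addr.
by move=> k'; have := zeta_zero (rshift _ k'); rewrite /= ltnNge leq_addr.
Qed.

Lemma dnbhs0P (R : rcfType) (P : R -> Prop) :
  (\forall g \near 0^', P g) <->
  exists2 d : R, 0 < d & forall g, 0 < `|g| < d -> P g.
Proof.
split=> [/nbhs_normP[d d0 dP]|[d d0 dP]].
  exists d => // g /andP[g0 gd]; apply: dP; last by rewrite -normr_gt0.
  by rewrite /= sub0r normrN.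
apply/nbhs_normP; exists d => // g /= gd g0.
by apply: dP; rewrite normr_gt0 g0 -normrN -sub0r.
Qed.

Lemma cvg_sum {K : numFieldType} {V : pseudoMetricNormedZmodType K} {T I : Type}
    {F : set_system T} {FF : Filter F} (r : seq I) (P : pred I)
    (f : I -> T -> V) (l : I -> V) :
  (forall i, f i x @[x --> F] --> l i) ->
  \sum_(i <- r | P i) f i x @[x --> F] --> \sum_(i <- r | P i) l i.
Proof.
move=> fl; apply: cvg_big => [|i _]; last exact: fl.
exact: pseudometric_normed_Zmodule.add_continuous.
Qed.

Lemma cvgX {K : numFieldType} {T : Type} {F : set_system T} {FF : Filter F}
    (f : T -> K) (l : K) n :
  f x @[x --> F] --> l -> f x ^+ n @[x --> F] --> l ^+ n.
Proof.
move=> fl; elim: n => [|n IHn].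
  by under eq_cvg do rewrite expr0; exact: cvg_cst.
by under eq_cvg do rewrite exprS; rewrite exprS; exact: cvgM.
Qed.

Lemma sgr_eq_dist_lt (R : realDomainType) (x y : R) :
  `|x - y| < `|y| -> Num.sg x = Num.sg y.
Proof.
case: (ltrgtP y 0) => [y0|y0|->]; last by rewrite normr0 ltNge normr_ge0.
  by rewrite (ltr0_norm y0) ltr_norml => /andP[_ ?]; rewrite !ltr0_sg //; lra.
by rewrite (gtr0_norm y0) ltr_norml => /andP[? _]; rewrite !gtr0_sg //; lra.
Qed.

Section ComplexLimits.
Variable R : rcfType.

(* The library's normed-field topology on R[i] is only found through this cast. *)
Local Notation C := (R[i] : numFieldType).

Section Filter.
Variables (T : Type) (F : set_system T).
Context {FF : Filter F}.

Lemma cvg_complex (f : T -> R) (l : R) :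
  f x @[x --> F] --> l -> ((f x)%:C : C) @[x --> F] --> (l%:C : C).
Proof.
move=> /cvgrPdist_lt fl; apply/cvgrPdist_lt => -[a b].
rewrite ltcE /= => /andP[/eqP -> a0]; near=> x.
rewrite -rmorphB normcR -[a +i* 0]/(a%:C) ltcR.
by near: x; exact: fl.
Unshelve. all: by end_near. Qed.

Lemma cvg_conj (f : T -> C) (l : C) :
  f x @[x --> F] --> l -> ((f x)^* : C) @[x --> F] --> (l^* : C).
Proof.
move=> /cvgrPdist_lt fl; apply/cvgrPdist_lt => e e0; near=> x.
by rewrite -rmorphB normcJ; near: x; exact: fl.
Unshelve. all: by end_near. Qed.

Lemma cvg_dist_le (f : T -> C) (h : T -> R) (l : C) :
  (\forall x \near F, `|f x - l| <= (h x)%:C) -> h x @[x --> F] --> 0 ->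
  f x @[x --> F] --> l.
Proof.
move=> fh /cvg_complex; rewrite rmorph0 => h0; apply/cvgrPdist_le => e e0.
have hle := cvgr0_norm_le _ h0 _ e0; near=> x.
have fxl : `|f x - l| <= (h x)%:C by near: x; exact: fh.
have hxe : `|(h x)%:C| <= e by near: x; exact: hle.
rewrite distrC (le_trans fxl) // (le_trans _ hxe) //.
by rewrite ger0_norm // (le_trans _ fxl).
Unshelve. all: by end_near. Qed.

Lemma cvg_sg_Re (f : T -> C) (L : C) :
  f x @[x --> F] --> L -> complex.Re L != 0 ->
  \forall x \near F, Num.sg (complex.Re (f x)) = Num.sg (complex.Re L).
Proof.
move=> /cvgrPdist_lt fL ReL0.
have : 0 < `|complex.Re L|%:C by rewrite ltcR normr_gt0.
move=> /fL; apply: filterS => x Lfx; apply: sgr_eq_dist_lt.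
rewrite -ltcR (le_lt_trans _ Lfx) // -normrN opprB -raddfB.
exact: normc_ge_Re.
Qed.

Lemma cvg_homog_sum (u v : T -> C) (a b : C) p :
  u x @[x --> F] --> a -> v x @[x --> F] --> b ->
  homog_sum (u x) (v x) p @[x --> F] --> (homog_sum a b p : C).
Proof.
move=> ua vb; rewrite /homog_sum; apply: (@cvg_sum _ C) => j.
by apply: (@cvgM C); exact: cvgX.
Qed.

Lemma cvg_slope_inv (S : siteset R) (z w : T -> C)
    (cz cw : 'I_(nsites S) -> C) :
  (forall a, (z x - pos S a)^-1 @[x --> F] --> cz a) ->
  (forall a, (w x - pos S a)^-1 @[x --> F] --> cw a) ->
  slope S (z x) (w x) @[x --> F] -->
    (\sum_(a < nsites S) \sum_(p < size (lev S a))
       - (lev S a)`_p * homog_sum (cz a) (cw a) p : C).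
Proof.
move=> zc wc; apply: (@cvg_sum _ C) => a; apply: (@cvg_sum _ C) => p.
by apply: (@cvgM C); [exact: cvg_cst | exact: cvg_homog_sum].
Qed.

Lemma cvg_slope (S : siteset R) (z w : T -> C) (zeta xi : C) :
  nonpole S zeta -> nonpole S xi ->
  z x @[x --> F] --> zeta -> w x @[x --> F] --> xi ->
  slope S (z x) (w x) @[x --> F] --> (slope S zeta xi : C).
Proof.
move=> nzeta nxi zeta_lim xi_lim; apply: cvg_slope_inv => a.
  apply: (@cvgV C); first by rewrite subr_eq0; exact: nzeta.
  exact: cvgB zeta_lim (cvg_cst _).
apply: (@cvgV C); first by rewrite subr_eq0; exact: nxi.
exact: cvgB xi_lim (cvg_cst _).
Qed.

Lemma cvg_slope0 (S : siteset R) (z w : T -> C) :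
  (forall a, (z x - pos S a)^-1 @[x --> F] --> (0 : C)) ->
  (forall a, (w x - pos S a)^-1 @[x --> F] --> (0 : C)) ->
  slope S (z x) (w x) @[x --> F] --> (0 : C).
Proof.
move=> z0 w0; have := cvg_slope_inv z0 w0.
by rewrite big1 // => a _; rewrite big1 // => p _; rewrite homog_sum00 mulr0.
Qed.

End Filter.

Lemma cvg_dist_le_linear (f : R -> C) (l : C) (c : R) :
  (\forall g \near 0^', `|f g - l| <= (c * `|g|)%:C) -> f g @[g --> 0^'] --> l.
Proof.
move=> fl; apply: cvg_dist_le fl _.
have : c * `|g| @[g --> (0 : R)^'] --> c * `|0 : R|.
  by apply: cvgM; [exact: cvg_cst | apply: cvg_norm; exact: cvg_within].
by rewrite normr0 mulr0.
Qed.

Lemma cvg_inv_shift0 (z : R -> C) (zeta : C) (s : R) : s != 0 ->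
  z g @[g --> 0^'] --> zeta ->
  (z g + (s * g^-1)%:C : C)^-1 @[g --> 0^'] --> (0 : C).
Proof.
move=> s0 z_lim.
have gC0 : (g%:C : C) @[g --> (0 : R)^'] --> (0 : C).
  by rewrite -[0 : C]/((0 : R)%:C); apply: cvg_complex; exact: cvg_within.
have sC0 : s%:C != 0 :> C by rewrite -[0 : C]/(0%:C) (inj_eq (@complexI _)).
have : (g%:C * (g%:C * z g + s%:C)^-1 : C) @[g --> 0^'] -->
         0 * (0 * zeta + s%:C)^-1.
  apply: (cvgM gC0); apply: (@cvgV C); first by rewrite mul0r add0r.
  exact: (cvgD (cvgM gC0 z_lim) (cvg_cst _)).
rewrite mul0r; apply: cvg_trans; apply: near_eq_cvg; near=> g.
have gC_neq0 : g%:C != 0 :> C.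
  rewrite -[0 : C]/(0%:C) (inj_eq (@complexI _)).
  by near: g; exact: nbhs_dnbhs_neq.
rewrite rmorphM fmorphV /=.
have -> : z g + s%:C / g%:C = (g%:C * z g + s%:C) / g%:C by field.
by rewrite invfM invrK mulrC.
Unshelve. all: by end_near. Qed.

Lemma cvg_slope12_left (S1 S2 : siteset R) (z : R -> C) (zeta : C) :
  nonpole S1 zeta -> zeta^* = zeta -> z g @[g --> 0^'] --> zeta ->
  slope12 S1 S2 g (z g) (z g)^* @[g --> 0^'] --> (dchi S1 zeta : C).
Proof.
move=> nzeta zetaJ z_lim.
have zJ_lim : ((z g)^* : C) @[g --> 0^'] --> zeta.
  by rewrite -zetaJ; exact: cvg_conj.
have m1_neq0 : -1 != 0 :> R by rewrite oppr_eq0 oner_eq0.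
have far (u : R -> C) a : u g @[g --> 0^'] --> zeta ->
    (u g - (g^-1)%:C - pos S2 a : C)^-1 @[g --> 0^'] --> (0 : C).
  move=> u_lim.
  rewrite (@eq_cvg _ _ _ _ (fun g => (u g - pos S2 a + (-1 * g^-1)%:C : C)^-1)).
    exact: cvg_inv_shift0 m1_neq0 (cvgB u_lim (cvg_cst _)).
  by move=> g; rewrite mulN1r rmorphN addrAC.
rewrite /slope12 -[dchi S1 zeta]addr0 -slope_diag.
apply: (@cvgD _ C); first exact: cvg_slope.
by apply: cvg_slope0 => a; apply: far.
Qed.

Lemma cvg_slope12_right (S1 S2 : siteset R) (z : R -> C) (zeta : C) :
  nonpole S2 zeta -> zeta^* = zeta -> z g - (g^-1)%:C @[g --> 0^'] --> zeta ->
  slope12 S1 S2 g (z g) (z g)^* @[g --> 0^'] --> (dchi S2 zeta : C).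
Proof.
move=> nzeta zetaJ z_lim.
have zJ_lim : ((z g)^* - (g^-1)%:C : C) @[g --> 0^'] --> zeta.
  rewrite -zetaJ (@eq_cvg _ _ _ _ (fun g => (z g - (g^-1)%:C)^* : C)).
    exact: cvg_conj.
  by move=> g; rewrite conjc_subR.
have far (u : R -> C) a : u g - (g^-1)%:C @[g --> 0^'] --> zeta ->
    (u g - pos S1 a : C)^-1 @[g --> 0^'] --> (0 : C).
  move=> u_lim.
  rewrite (@eq_cvg _ _ _ _
    (fun g => (u g - (g^-1)%:C - pos S1 a + (1 * g^-1)%:C : C)^-1)).
    exact: cvg_inv_shift0 (oner_neq0 R) (cvgB u_lim (cvg_cst _)).
  by move=> g; rewrite mul1r addrAC subrK.
rewrite /slope12 -[dchi S2 zeta]add0r -slope_diag.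
apply: (@cvgD _ C); first by apply: cvg_slope0 => a; apply: far.
exact: cvg_slope.
Qed.

Lemma phi12_zero_real_sign (S1 S2 : siteset R) linf (zt : R -> C) (L : C) :
  valid_siteset S1 -> valid_siteset S2 ->
  (\forall g \near 0^', is_zero12 S1 S2 linf g (zt g)) ->
  slope12 S1 S2 g (zt g) (zt g)^* @[g --> 0^'] --> L ->
  complex.Im L = 0 -> L != 0 ->
  \forall g \near 0^', [/\ complex.Im (zt g) = 0,
    complex.Im (dphi12 S1 S2 g (zt g)) = 0, complex.Im L = 0 &
    Num.sg (complex.Re (dphi12 S1 S2 g (zt g))) = Num.sg (complex.Re L)].
Proof.
move=> v1 v2 zt_zero slope_lim ImL L0.
have ReL0 : complex.Re L != 0.
  by apply: contra L0; case: L ImL slope_lim => a b /= -> _ /eqP->.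
have slope_neq0 := @cvgr_neq0 _ C _ _ _ _ L slope_lim L0.
have sg_slope := cvg_sg_Re slope_lim ReL0.
near=> g.
have [n1 n2 zero] : is_zero12 S1 S2 linf g (zt g) by near: g.
have n2J : nonpole S2 ((zt g)^* - (g^-1)%:C).
  by rewrite -conjc_subR; exact: nonpole_conj.
have ztJ : (zt g)^* = zt g.
  have /eqP := phi12_sub_slope linf n1 (nonpole_conj v1 n1) n2 n2J.
  rewrite phi12_conj // zero conjc0 subrr eq_sym mulf_eq0 subr_eq0.
  have /negPf-> : slope12 S1 S2 g (zt g) (zt g)^* != 0.
    by near: g; exact: slope_neq0.
  by rewrite orbF eq_sym => /eqP.
split=> //; first exact/Im_eq0_conjc.
  by apply/Im_eq0_conjc; rewrite -dphi12_conj // ztJ.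
rewrite dphi12_slope12 -[X in slope12 _ _ _ _ X]ztJ.
by near: g; exact: sg_slope.
Unshelve. all: by end_near. Qed.

End ComplexLimits.

Unset Implicit Arguments. Set Strict Implicit. Set Printing Implicit Defensive.

Theorem lemmaC4 (R : realType) (linf : R) (S1 S2 : siteset R)
  (zeta : 'I_(mult S1 + mult S2) -> R[i])
  (i : 'I_(mult S1 + mult S2))
  (zt : R -> R[i]) :
  linf != 0 ->
  valid_siteset S1 -> valid_siteset S2 ->
  (* zeta_j (j < M1) are pairwise distinct zeros of phi_1, and
     zeta_j (M1 <= j < M) are pairwise distinct zeros of phi_2 *)
  (forall j : 'I_(mult S1 + mult S2),
     if (j < mult S1)%N then is_zero S1 linf (zeta j)
     else is_zero S2 linf (zeta j)) ->
  (forall j1 j2 : 'I_(mult S1 + mult S2),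
     (j1 < mult S1)%N = (j2 < mult S1)%N -> zeta j1 = zeta j2 -> j1 = j2) ->
  (* zt gamma = zeta_i(gamma): a zero of phi_{1(x)2,gamma} for small gamma <> 0 *)
  (exists2 d : R, 0 < d & forall gam : R, 0 < `|gam| < d ->
     is_zero12 S1 S2 linf gam (zt gam)) ->
  (* labelling: zeta_i(gamma) = zeta_i + O(gamma) (i < M1),
     resp. gamma^-1 + zeta_i + O(gamma) (i >= M1) *)
  (exists c : R, exists2 d : R, 0 < d & forall gam : R, 0 < `|gam| < d ->
     `|zt gam - (zeta i + (if (i < mult S1)%N then 0 else (gam^-1)%:C))|
       <= (c * `|gam|)%:C) ->
  (* zeta_i^(k) is real *)
  complex.Im (zeta i) = 0 ->
  exists2 d : R, 0 < d & forall gam : R, 0 < `|gam| < d ->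
    [/\ complex.Im (zt gam) = 0,
        complex.Im (dphi12 S1 S2 gam (zt gam)) = 0,
        complex.Im (dchi (if (i < mult S1)%N then S1 else S2) (zeta i)) = 0 &
        Num.sg (complex.Re (dphi12 S1 S2 gam (zt gam)))
          = Num.sg (complex.Re (dchi (if (i < mult S1)%N then S1 else S2) (zeta i)))].
Proof.
move=> linf0 v1 v2 zeta_zero zeta_inj /dnbhs0P zt_zero [c /dnbhs0P zt_label] Im_zeta.
have simple := dchi_block_neq0 linf0 zeta_zero zeta_inj i.
have zetaJ : (zeta i)^* = zeta i by apply/Im_eq0_conjc.
apply/dnbhs0P; move: (zeta_zero i) zt_label simple.
case: (i < mult S1)%N => /= -[nzeta _] zt_label simple.
  rewrite addr0 in zt_label.
  exact: phi12_zero_real_sign v1 v2 zt_zero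
    (cvg_slope12_left S2 nzeta zetaJ (cvg_dist_le_linear zt_label))
    (dchi_real v1 Im_zeta) simple.
have {}zt_label :
    \forall g \near 0^', `|zt g - (g^-1)%:C - zeta i| <= (c * `|g|)%:C.
  by move: zt_label; apply: filterS => g; rewrite opprD addrA addrAC.
exact: phi12_zero_real_sign v1 v2 zt_zero
  (cvg_slope12_right S1 nzeta zetaJ (cvg_dist_le_linear zt_label))
  (dchi_real v2 Im_zeta) simple.
Qed.
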